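(* Let $p,q\geq1$ be integers and let $(\vartheta(s),\alpha(s))$ be a trajectory of the differential system $$\dot\vartheta=3\sin\vartheta\cos\vartheta\sin(\alpha-\vartheta),\qquad \dot\alpha=q\cos\alpha\cos\vartheta-p\sin\alpha\sin\vartheta.$$ Suppose that for some $s_0$ one has $0<\vartheta(s_0)<\pi/2$ and $\vartheta(s_0)+\pi/2\leq\alpha(s_0)\leq\vartheta(s_0)+3\pi/2$, i.e. the trajectory is in $R_2=\{(\vartheta,\alpha):0\leq\vartheta\leq\pi/2,\ \vartheta+\pi/2\leq\alpha\leq\vartheta+3\pi/2\}$. Then the trajectory is in $R_2$ for all $s\leq s_0$. *)

From Stdlib Require Import Reals.
Open Scope R_scope.

Definition is_trajectory (p q : nat) (th al : R -> R) : Prop :=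
  forall s : R,
    derivable_pt_lim th s (3 * sin (th s) * cos (th s) * sin (al s - th s)) /\
    derivable_pt_lim al s (INR q * cos (al s) * cos (th s) - INR p * sin (al s) * sin (th s)).

Definition R2 (t a : R) : Prop :=
  0 <= t <= PI / 2 /\ t + PI / 2 <= a <= t + 3 * PI / 2.

(* Along the trajectory, u = 2 th satisfies u' = 3 sin u sin (al - th), so
   (sin u)^2 grows at most exponentially forward in time and cannot vanish
   before s0: th stays in (0, pi/2).  The condition al - th in [pi/2, 3pi/2]
   is the sign condition cos (al - th) <= 0, and at a zero of cos (al - th)
   its derivative is (p + q + 3) sin th cos th > 0; so cos (al - th) cannot
   turn positive backwards in time, and by continuity al - th cannot jump to
   another arc of {cos <= 0}. *)

From Stdlib Require Import Reals Lra Psatz Classical.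
Open Scope R_scope.

Lemma continuity_pt_nbhd (f : R -> R) (x e : R) :
  continuity_pt f x -> 0 < e ->
  exists d, 0 < d /\ forall y, Rabs (y - x) < d -> Rabs (f y - f x) < e.
Proof.
  intros Hf He. destruct (Hf e He) as [d [Hd Hy]].
  exists d; split; [exact Hd |]. intros y Hyx.
  destruct (Req_dec y x) as [-> | Hne].
  - rewrite Rminus_diag, Rabs_R0; exact He.
  - exact (Hy y (conj (conj I (not_eq_sym Hne)) Hyx)).
Qed.

Lemma derivable_pt_lim_pos_lt_left (f : R -> R) (x l : R) :
  derivable_pt_lim f x l -> 0 < l ->
  exists d, 0 < d /\ forall y, x - d < y < x -> f y < f x.
Proof.
  intros Hf Hl. destruct (Hf l Hl) as [d Hd].
  exists d; split; [exact (cond_pos d) |]. intros y Hy.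
  specialize (Hd (y - x) ltac:(lra) ltac:(apply Rabs_def1; lra)).
  replace (x + (y - x)) with y in Hd by ring.
  apply Rabs_def2 in Hd.
  set (r := (f y - f x) / (y - x)) in Hd.
  assert (Hr : f y - f x = r * (y - x)) by (unfold r; field; lra).
  nra.
Qed.

Lemma continuity_gt_backward (f : R -> R) (c s0 : R) :
  continuity f -> c < f s0 -> (forall t, t <= s0 -> f t <> c) ->
  forall t, t <= s0 -> c < f t.
Proof.
  intros Hf Hs0 Hne t Ht. apply Rnot_le_lt; intro Hle.
  assert (Hfc : continuity (fun u => f u - c)).
  { intro u. apply continuity_pt_minus; [apply Hf |].
    apply continuity_pt_const; intros ? ?; reflexivity. }
  destruct (IVT_cor _ t s0 Hfc Ht ltac:(nra)) as [z [Hz Hfz]].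
  apply (Hne z (proj2 Hz)); lra.
Qed.

Lemma continuity_lt_backward (f : R -> R) (c s0 : R) :
  continuity f -> f s0 < c -> (forall t, t <= s0 -> f t <> c) ->
  forall t, t <= s0 -> f t < c.
Proof.
  intros Hf Hs0 Hne t Ht.
  enough (- c < - f t) by lra.
  apply (continuity_gt_backward (fun u => - f u) (- c) s0); try lra.
  - intro u; apply continuity_pt_opp, Hf.
  - intros u Hu Hfu; apply (Hne u Hu); lra.
Qed.

(* Gronwall: [g u * exp (- k u)] is nonincreasing. *)
Lemma pos_backward_of_deriv_le_mul (g g' : R -> R) (k s0 : R) :
  (forall t, derivable_pt_lim g t (g' t)) -> (forall t, g' t <= k * g t) ->
  0 < g s0 -> forall t, t <= s0 -> 0 < g t.
Proof.
  intros Hg Hle Hs0 t Ht.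
  set (F := fun u => g u * exp (- k * u)).
  assert (HF : forall u, derivable_pt_lim F u ((g' u - k * g u) * exp (- k * u))).
  { intro u.
    assert (Hlin : derivable_pt_lim (fun v => - k * v) u (- k)).
    { pose proof (derivable_pt_lim_scal id (- k) u 1 (derivable_pt_lim_id u)) as H.
      rewrite Rmult_1_r in H; exact H. }
    pose proof (derivable_pt_lim_comp _ exp u _ _ Hlin (derivable_pt_lim_exp (- k * u))) as Hexp.
    pose proof (derivable_pt_lim_mult g _ u _ _ (Hg u) Hexp) as H.
    replace ((g' u - k * g u) * exp (- k * u))
      with (g' u * exp (- k * u) + g u * (exp (- k * u) * - k)) by ring.
    exact H. }
  assert (Hmono : F s0 <= F t).
  { destruct Ht as [Hlt | ->]; [| lra].
    destruct (MVT_cor2 F _ t s0 Hlt (fun c _ => HF c)) as [c [Hc _]].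
    assert (0 <= (k * g c - g' c) * exp (- k * c)).
    { apply Rmult_le_pos; [specialize (Hle c); lra | apply Rlt_le, exp_pos]. }
    nra. }
  unfold F in Hmono.
  pose proof (exp_pos (- k * s0)). pose proof (exp_pos (- k * t)). nra.
Qed.

Lemma nonpos_backward_of_deriv_pos_at_zero (f f' : R -> R) (s0 : R) :
  (forall t, derivable_pt_lim f t (f' t)) -> f s0 <= 0 ->
  (forall t, t <= s0 -> f t = 0 -> 0 < f' t) ->
  forall t, t <= s0 -> f t <= 0.
Proof.
  intros Hf Hs0 Hzero t Ht. apply Rnot_lt_le; intro Hpos.
  assert (Hcont : forall x, continuity_pt f x).
  { intro x; apply derivable_continuous_pt; exists (f' x); exact (Hf x). }
  set (S := fun x => t <= x <= s0 /\ 0 < f x).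
  destruct (completeness S) as [m [Hub Hlub]].
  { exists s0; intros x Hx; apply Hx. }
  { exists t; split; [lra | exact Hpos]. }
  assert (Hms : m <= s0) by (apply Hlub; intros x Hx; apply Hx).
  assert (Happrox : forall e, 0 < e -> exists x, S x /\ m - e < x).
  { intros e He. apply NNPP; intro Hnone.
    enough (m <= m - e) by lra.
    apply Hlub; intros x Hx. apply Rnot_lt_le; intro Hx'.
    apply Hnone; exists x; split; assumption. }
  assert (Hm_ge : 0 <= f m).
  { apply Rnot_lt_le; intro Hneg.
    destruct (continuity_pt_nbhd f m (- f m) (Hcont m) ltac:(lra)) as [d [Hd Hnear]].
    destruct (Happrox d Hd) as [x [[Hx Hfx] Hxd]].
    pose proof (Hub x (conj Hx Hfx)).
    specialize (Hnear x ltac:(apply Rabs_def1; lra)). apply Rabs_def2 in Hnear. lra. }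
  assert (Hm_le : f m <= 0).
  { apply Rnot_lt_le; intro Hmpos.
    assert (Hm0 : m < s0) by (destruct Hms as [| ->]; lra).
    destruct (continuity_pt_nbhd f m (f m) (Hcont m) Hmpos) as [d [Hd Hnear]].
    set (y := Rmin s0 (m + d / 2)).
    assert (Hy : m < y <= m + d / 2)
      by (unfold y; split; [apply Rmin_case |]; [lra | lra | apply Rmin_r]).
    specialize (Hnear y ltac:(apply Rabs_def1; lra)). apply Rabs_def2 in Hnear.
    enough (y <= m) by lra.
    pose proof (Hub t (conj (conj (Rle_refl t) Ht) Hpos)).
    apply Hub; split; [split; [lra | apply Rmin_l] | lra]. }
  destruct (derivable_pt_lim_pos_lt_left f m (f' m) (Hf m) (Hzero m Hms ltac:(lra)))
    as [d [Hd Hleft]].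
  destruct (Happrox d Hd) as [x [[Hx Hfx] Hxd]].
  pose proof (Hub x (conj Hx Hfx)) as Hxm.
  destruct Hxm as [Hxm | ->]; [| lra].
  pose proof (Hleft x (conj Hxd Hxm)). lra.
Qed.

Lemma cos_nonpos_bounds (x : R) :
  0 < x < 2 * PI -> cos x <= 0 -> PI / 2 <= x <= 3 * PI / 2.
Proof.
  intros Hx Hcos. split; apply Rnot_lt_le; intro Hlt.
  - pose proof (cos_gt_0 x ltac:(pose proof PI_RGT_0; lra) Hlt). lra.
  - assert (Hper : cos x = cos (x - 2 * PI)).
    { rewrite cos_minus, cos_2PI, sin_2PI. ring. }
    pose proof (cos_gt_0 (x - 2 * PI) ltac:(lra) ltac:(lra)). lra.
Qed.

Section Trajectory.

Variables (p q : nat) (th al : R -> R).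
Hypothesis htraj : is_trajectory p q th al.

Lemma th_continuous : continuity th.
Proof.
  intro t. apply derivable_continuous_pt. eexists; exact (proj1 (htraj t)).
Qed.

Lemma phase_deriv (t : R) :
  derivable_pt_lim (fun u => al u - th u) t
    (INR q * cos (al t) * cos (th t) - INR p * sin (al t) * sin (th t)
     - 3 * sin (th t) * cos (th t) * sin (al t - th t)).
Proof. exact (derivable_pt_lim_minus al th t _ _ (proj2 (htraj t)) (proj1 (htraj t))). Qed.

Lemma phase_continuous : continuity (fun u => al u - th u).
Proof. intro t. apply derivable_continuous_pt. eexists; exact (phase_deriv t). Qed.

(* With [u = 2 th], the first equation reads [u' = 3 sin u sin (al - th)]. *)
Lemma sin_double_th_sqr_deriv (t : R) :
  derivable_pt_lim (fun u => Rsqr (sin (2 * th u))) t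
    (6 * Rsqr (sin (2 * th t)) * cos (2 * th t) * sin (al t - th t)).
Proof.
  pose proof (derivable_pt_lim_scal th 2 t _ (proj1 (htraj t))) as Hdouble.
  pose proof (derivable_pt_lim_comp (fun u => 2 * th u) sin t _ _ Hdouble
                (derivable_pt_lim_sin (2 * th t))) as Hsin.
  pose proof (derivable_pt_lim_comp _ Rsqr t _ _ Hsin
                (derivable_pt_lim_Rsqr (sin (2 * th t)))) as H.
  replace (6 * Rsqr (sin (2 * th t)) * cos (2 * th t) * sin (al t - th t))
    with (2 * sin (2 * th t)
          * (cos (2 * th t) * (2 * (3 * sin (th t) * cos (th t) * sin (al t - th t)))))
    by (rewrite sin_2a; unfold Rsqr; ring).
  exact H.
Qed.

Lemma th_stays_in_quarter (s0 : R) : 0 < th s0 < PI / 2 ->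
  forall t, t <= s0 -> 0 < th t < PI / 2.
Proof.
  intros Hs0.
  assert (Hsin : forall t, t <= s0 -> 0 < Rsqr (sin (2 * th t))).
  { apply (pos_backward_of_deriv_le_mul _ _ 6 s0 sin_double_th_sqr_deriv).
    - intro t. pose proof (COS_bound (2 * th t)). pose proof (SIN_bound (al t - th t)).
      pose proof (Rle_0_sqr (sin (2 * th t))).
      assert (cos (2 * th t) * sin (al t - th t) <= 1) by nra.
      nra.
    - apply Rlt_0_sqr, Rgt_not_eq, sin_gt_0; lra. }
  assert (Havoid : forall t, t <= s0 -> th t <> 0 /\ th t <> PI / 2).
  { intros t Ht; split; intro Heq; pose proof (Hsin t Ht) as Hpos;
      rewrite Heq in Hpos.
    - rewrite Rmult_0_r, sin_0, Rsqr_0 in Hpos; lra.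
    - replace (2 * (PI / 2)) with PI in Hpos by field.
      rewrite sin_PI, Rsqr_0 in Hpos; lra. }
  intros t Ht; split.
  - apply (continuity_gt_backward th 0 s0 th_continuous); [lra | | exact Ht].
    intros u Hu; apply (Havoid u Hu).
  - apply (continuity_lt_backward th (PI / 2) s0 th_continuous); [lra | | exact Ht].
    intros u Hu; apply (Havoid u Hu).
Qed.

Lemma cos_phase_deriv (t : R) :
  derivable_pt_lim (fun u => cos (al u - th u)) t
    (- sin (al t - th t)
     * (INR q * cos (al t) * cos (th t) - INR p * sin (al t) * sin (th t)
        - 3 * sin (th t) * cos (th t) * sin (al t - th t))).
Proof.
  exact (derivable_pt_lim_comp _ cos t _ _ (phase_deriv t) (derivable_pt_lim_cos _)).
Qed.

(* Expanding [al = th + (al - th)], the derivative at a zero of [cos (al - th)]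
   is [(p + q + 3) sin th cos th sin (al - th)^2] with [sin (al - th)^2 = 1]. *)
Lemma cos_phase_deriv_pos_at_zero (t : R) :
  0 < th t < PI / 2 -> cos (al t - th t) = 0 ->
  0 < - sin (al t - th t)
      * (INR q * cos (al t) * cos (th t) - INR p * sin (al t) * sin (th t)
         - 3 * sin (th t) * cos (th t) * sin (al t - th t)).
Proof.
  intros Hth Hzero.
  pose proof (sin_gt_0 (th t) ltac:(lra) ltac:(pose proof PI_RGT_0; lra)) as Hs.
  pose proof (cos_gt_0 (th t) ltac:(pose proof PI_RGT_0; lra) ltac:(lra)) as Hc.
  pose proof (sin2_cos2 (al t - th t)) as Hpyth.
  pose proof (pos_INR p). pose proof (pos_INR q).
  replace (al t) with (th t + (al t - th t)) by ring.
  rewrite cos_plus, sin_plus.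
  replace (th t + (al t - th t) - th t) with (al t - th t) by ring.
  rewrite Hzero in *. unfold Rsqr in Hpyth.
  set (w := sin (al t - th t)) in *.
  replace (- w * (INR q * (cos (th t) * 0 - sin (th t) * w) * cos (th t)
                 - INR p * (sin (th t) * 0 + cos (th t) * w) * sin (th t)
                 - 3 * sin (th t) * cos (th t) * w))
    with ((INR q + INR p + 3) * (sin (th t) * cos (th t)) * (w * w)) by ring.
  assert (w * w = 1) as -> by lra.
  assert (0 < sin (th t) * cos (th t)) by nra.
  nra.
Qed.

Lemma cos_phase_nonpos_backward (s0 : R) :
  0 < th s0 < PI / 2 -> cos (al s0 - th s0) <= 0 ->
  forall t, t <= s0 -> cos (al t - th t) <= 0.
Proof.
  intros Hth Hs0.
  apply (nonpos_backward_of_deriv_pos_at_zero _ _ s0 cos_phase_deriv Hs0).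
  intros t Ht. apply cos_phase_deriv_pos_at_zero, (th_stays_in_quarter s0 Hth t Ht).
Qed.

Lemma phase_stays_in_arc (s0 : R) :
  0 < th s0 < PI / 2 -> PI / 2 <= al s0 - th s0 <= 3 * PI / 2 ->
  forall t, t <= s0 -> PI / 2 <= al t - th t <= 3 * PI / 2.
Proof.
  intros Hth Hs0. pose proof PI_RGT_0.
  assert (Hcos : forall t, t <= s0 -> cos (al t - th t) <= 0).
  { apply (cos_phase_nonpos_backward s0 Hth), cos_le_0; lra. }
  assert (Hnonzero : forall t, t <= s0 -> al t - th t <> 0 /\ al t - th t <> 2 * PI).
  { intros t Ht; split; intro Heq; pose proof (Hcos t Ht) as Hc; rewrite Heq in Hc.
    - rewrite cos_0 in Hc; lra.
    - rewrite cos_2PI in Hc; lra. }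
  intros t Ht. apply (cos_nonpos_bounds _); [split | exact (Hcos t Ht)].
  - apply (continuity_gt_backward _ 0 s0 phase_continuous); [lra | | exact Ht].
    intros u Hu; apply (Hnonzero u Hu).
  - apply (continuity_lt_backward _ (2 * PI) s0 phase_continuous); [lra | | exact Ht].
    intros u Hu; apply (Hnonzero u Hu).
Qed.

End Trajectory.

Theorem lemma4p8 (p q : nat) (hp : (1 <= p)%nat) (hq : (1 <= q)%nat)
  (th al : R -> R) (htraj : is_trajectory p q th al) (s0 : R)
  (h0 : 0 < th s0 < PI / 2)
  (h1 : th s0 + PI / 2 <= al s0 <= th s0 + 3 * PI / 2) :
  forall s : R, s <= s0 -> R2 (th s) (al s).
Proof.
  intros s Hs.
  pose proof (th_stays_in_quarter p q th al htraj s0 h0 s Hs).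
  pose proof (phase_stays_in_arc p q th al htraj s0 h0 ltac:(lra) s Hs).
  unfold R2; lra.
Qed.
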